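(* Let $G=G_1\ast\cdots\ast G_n$ be a free product of finitely many nontrivial finite groups. Fix an enumeration (well order) $g_1,g_2,g_3,\dots$ of $G$ and order $\mathbb{Z}^{G}$ lexicographically. For a nuclear vertex $v=[\mathcal{H},\underline{\underline{0}}]$ of $L(G)$ define $\|v\|\in\mathbb{Z}^G$ by $\|v\|_i=|g_i|_{\mathcal{H}}$. Then this norm well orders the nuclear vertices of $L(G)$, i.e. $u<v\iff\|u\|<\|v\|$ is a well-ordering of the set of nuclear vertices.
   Context: A basis of $G$ is a set $\mathcal{H}=\{H_1,\dots,H_n\}$ of subgroups with $H_i$ conjugate to $G_i$ and $G=H_1\ast\cdots\ast H_n$; $|g|_{\mathcal{H}}$ is the (non-cyclic) length of the reduced word for $g$ in the free product $H_1\ast\cdots\ast H_n$. A pointed labelled tree is a finite bipartite tree whose vertices are labelled (labels $\ast,1,\dots,n$, each once) or unlabelled, each edge joining a labelled and an unlabelled vertex, unlabelled vertices of valence at least 2, $\ast$ of valence 1. For a labelled vertex $k$, the petals at $k$ are the label sets of components of $T-\{k\}$, forming a partition $\underline{\underline{A}}(k)$; the tree is identified with the family $\underline{\underline{A}}$; $\underline{\underline{A}}\le\underline{\underline{B}}$ means each petal of $\underline{\underline{A}}(k)$ is a union of petals of $\underline{\underline{B}}(k)$. The trivial tree $\underline{\underline{0}}$ has a single unlabelled vertex adjacent to all labelled vertices. For a basis $\mathcal{H}$, $k$ and $x_j\in H_k$ ($x_k=1$), the symmetric Whitehead automorphism $(\mathcal{H},x)$ acts on $H_j$ by $h\mapsto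 x_jhx_j^{-1}$, trivially on $H_k$; it is carried by $(\mathcal{H},\underline{\underline{A}})$ if $x$ is constant on petals of $\underline{\underline{A}}(k)$ and trivial on the petal containing $\ast$. Pairs $(\mathcal{H},\underline{\underline{A}})$, $(\rho(\mathcal{H}),\underline{\underline{A}})$ with $\rho$ a product of carried symmetric Whitehead automorphisms are identified; classes ordered by: $[\mathcal{H},\underline{\underline{A}}]\le[\mathcal{K},\underline{\underline{B}}]$ iff they have representatives with common basis and $\underline{\underline{A}}\le\underline{\underline{B}}$. $L(G)$ is the realization of this poset. A nuclear vertex is one of the form $[\mathcal{H},\underline{\underline{0}}]$ (it is determined by the basis $\mathcal{H}$). *)

From mathcomp Require Import all_boot.
From Stdlib Require Import ClassicalEpsilon.

Set Implicit Arguments.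
Unset Strict Implicit.
Unset Printing Implicit Defensive.

Local Open Scope group_scope.

Section FreeProducts.

Variable G : groupType.

Definition is_subgroup (S : G -> Prop) : Prop :=
  [/\ S 1, (forall x y, S x -> S y -> S (x * y)) & (forall x, S x -> S x^-1)].

Variable n : nat.

Definition word := seq ('I_n * G).

Definition word_val (w : word) : G := foldr (fun p acc => p.2 * acc) 1 w.

Definition reduced_word (H : 'I_n -> G -> Prop) (w : word) : Prop :=
  (forall p, p \in w -> H p.1 p.2 /\ p.2 <> 1) /\
  sorted (fun i j : 'I_n => i != j) (map fst w).

Definition free_product_decomp (H : 'I_n -> G -> Prop) : Prop :=
  (forall i, is_subgroup (H i)) /\
  (forall g : G, exists w, reduced_word H w /\ word_val w = g /\
     forall w', reduced_word H w' -> word_val w' = g -> w' = w).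

Definition word_length (H : 'I_n -> G -> Prop) (g : G) : nat :=
  epsilon (inhabits 0%N)
    (fun k => exists w, reduced_word H w /\ word_val w = g /\ size w = k).

Definition conjugate_subgroups (H K : G -> Prop) : Prop :=
  exists x : G, forall y, H y <-> K (x^-1 * y * x).

Definition basis (Gs H : 'I_n -> G -> Prop) : Prop :=
  (forall i, conjugate_subgroups (H i) (Gs i)) /\ free_product_decomp H.

Definition same_basis (H K : 'I_n -> G -> Prop) : Prop :=
  forall i x, H i x <-> K i x.

(* The norm ||[H,0]|| in Z^G (values are word lengths, hence in nat). *)
Definition basis_norm (H : 'I_n -> G -> Prop) : G -> nat := word_length H.

(* Lexicographic order on Z^G (here nat^G) w.r.t. the enumeration of G given
   by the injective position map idx : G -> nat (g comes before h iff
   idx g < idx h). *)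
Definition lex_lt (idx : G -> nat) (a b : G -> nat) : Prop :=
  exists g, (a g < b g)%N /\ forall h, (idx h < idx g)%N -> a h = b h.

Definition finite_pred (S : G -> Prop) : Prop :=
  exists s : seq G, forall x, S x -> x \in s.

Definition nontrivial_pred (S : G -> Prop) : Prop :=
  exists x, S x /\ x <> 1.

End FreeProducts.

(* Nuclear vertices [H,0] of L(G) are in bijection with bases H (the trivial
   tree carries only the trivial symmetric Whitehead automorphism), so we
   represent them by bases. *)
Definition nuclear_vertex (G : groupType) (n : nat) (Gs : 'I_n -> G -> Prop) :=
  {H : 'I_n -> G -> Prop | basis Gs H}.

Definition nuclear_lt (G : groupType) (n : nat) (Gs : 'I_n -> G -> Prop)
  (idx : G -> nat) (u v : nuclear_vertex Gs) : Prop :=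
  lex_lt idx (basis_norm (proj1_sig u)) (basis_norm (proj1_sig v)).

(* If
   phi_H is the automorphism of G conjugating each H_i onto G_i, then
   |g|_H = |phi_H g|_G, so the norm is determined by the images under phi_H of the
   finitely many elements of the factors G_i. Let m bound the positions of these
   elements in the enumeration. Along a descending sequence the first m coordinates
   of the norm decrease lexicographically, which can happen only finitely often;
   once they are fixed, every image phi_H s has length at most their maximum, so
   only finitely many norms remain and the strict order cannot descend forever.
   Bases with the same norm coincide: a nontrivial y in H_i has length one, hence
   lies in some K_j, and i = j because the retraction of G onto G_i kills every
   conjugate of G_j, j <> i. *)

From mathcomp Require Import all_boot.
From Stdlib Require Import Wellfounded ClassicalEpsilon Classical.

Set Implicit Arguments.
Unset Strict Implicit.
Unset Printing Implicit Defensive.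

Local Open Scope group_scope.

Lemma monoid_morphismV (G : groupType) (f : G -> G) :
  monoid_morphism f -> {morph f : x / x^-1}.
Proof. by move=> [f1 fM] x; apply/esym/mulg1_eq; rewrite -fM mulgV f1. Qed.

Lemma conjg_morphism (G : groupType) (x : G) : monoid_morphism (conjg^~ x).
Proof. by split=> [|y z]; rewrite ?conj1g ?conjMg. Qed.

Section Reduction.
Variables (G : groupType) (n : nat).
Implicit Types (w r : word G n) (F : 'I_n -> G -> G).

Definition cons_letter (p : 'I_n * G) r : word G n :=
  if p.2 == 1 then r else
  match r with
  | [::] => [:: p]
  | q :: r' =>
    if p.1 == q.1 then (if p.2 * q.2 == 1 then r' else (p.1, p.2 * q.2) :: r')
    else p :: r
  end.

Definition reduce w : word G n := foldr cons_letter [::] w.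

Definition map_letters F w : word G n := [seq (p.1, F p.1 p.2) | p <- w].

Lemma word_val_cat w1 w2 : word_val (w1 ++ w2) = word_val w1 * word_val w2.
Proof. by elim: w1 => [|p w IH] /=; rewrite ?mul1g // IH mulgA. Qed.

Lemma morph_word_val (f : G -> G) w : monoid_morphism f ->
  f (word_val w) = word_val [seq (p.1, f p.2) | p <- w].
Proof. by move=> [f1 fM]; elim: w => [|p w IH] //=; rewrite fM IH. Qed.

Lemma map_letters_id w : map_letters (fun _ y => y) w = w.
Proof. by elim: w => [|[i y] w IH] //=; rewrite IH. Qed.

Section LetterMorphism.
Variable F : 'I_n -> G -> G.
Hypothesis F_morph : forall k, monoid_morphism (F k).

Lemma word_val_map_cons_letter p r :
  word_val (map_letters F (cons_letter p r)) = F p.1 p.2 * word_val (map_letters F r).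
Proof.
have F1 k : F k 1 = 1 by case: (F_morph k).
have FM k : {morph F k : x y / x * y} by case: (F_morph k).
case: p => i y; rewrite /cons_letter /=.
have [->|_] := eqVneq y 1; first by rewrite F1 mul1g.
case: r => [|[j z] r] //=; have [<-|_] //= := eqVneq i j.
by have [yz1|_] /= := eqVneq (y * z) 1; rewrite mulgA -FM ?yz1 ?F1 ?mul1g.
Qed.

Lemma word_val_map_reduce w :
  word_val (map_letters F (reduce w)) = word_val (map_letters F w).
Proof. by elim: w => [|p w IH] //=; rewrite word_val_map_cons_letter IH. Qed.

End LetterMorphism.

Lemma word_val_reduce w : word_val (reduce w) = word_val w.
Proof.
have id_morph (k : 'I_n) : monoid_morphism (@id G) by [].
by have := word_val_map_reduce id_morph w; rewrite !map_letters_id.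
Qed.

Lemma reduced_cons_letter (H : 'I_n -> G -> Prop) p r :
  is_subgroup (H p.1) -> H p.1 p.2 -> reduced_word H r ->
  reduced_word H (cons_letter p r).
Proof.
case: p => i y /= [_ HM _] Hy [Hr Hs]; rewrite /cons_letter /=.
have [//|y1] := eqVneq y 1.
case: r Hr Hs => [|[j z] r] Hr Hs.
  by split=> // q; rewrite inE => /eqP -> /=; split=> //; apply/eqP.
have [Hz _] := Hr _ (mem_head _ _).
have [eij|nij] /= := eqVneq i j; last first.
  split=> [q|]; last by rewrite /= nij.
  by rewrite inE => /predU1P [-> /=|/Hr //]; split=> //; apply/eqP.
subst j; have [_|yz1] := eqVneq (y * z) 1.
  by split=> [q qr|]; [apply: Hr; rewrite inE qr orbT | apply: path_sorted Hs].
split=> // q; rewrite inE => /predU1P [-> /=|qr]; last by apply: Hr; rewrite inE qr orbT.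
by split; [exact: HM | apply/eqP].
Qed.

Lemma reduced_reduce (H : 'I_n -> G -> Prop) w :
  (forall i, is_subgroup (H i)) -> (forall q, q \in w -> H q.1 q.2) ->
  reduced_word H (reduce w).
Proof.
move=> Hsub; elim: w => [|p w IH] Hw /=; first by [].
apply: reduced_cons_letter; [exact: Hsub | apply: Hw; exact: mem_head |].
by apply: IH => q qw; apply: Hw; rewrite inE qw orbT.
Qed.

End Reduction.

Section FreeProductLift.
Variables (G : groupType) (n : nat) (H : 'I_n -> G -> Prop).
Hypothesis H_free : free_product_decomp H.

Definition reduced_form (g : G) : word G n :=
  epsilon (inhabits [::]) (fun w => reduced_word H w /\ word_val w = g).

Lemma reduced_formP g :
  reduced_word H (reduced_form g) /\ word_val (reduced_form g) = g.
Proof.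
apply: (epsilon_spec (inhabits [::]) (fun w => reduced_word H w /\ word_val w = g)).
by have [w [? [? _]]] := H_free.2 g; exists w.
Qed.

Lemma reduced_form_word w : reduced_word H w -> reduced_form (word_val w) = w.
Proof.
move=> rw; have [v [_ [_ v_uniq]]] := H_free.2 (word_val w).
have [rf vf] := reduced_formP (word_val w).
by rewrite (v_uniq _ rf vf) (v_uniq _ rw erefl).
Qed.

Lemma reduced_form_reduce w :
  (forall q, q \in w -> H q.1 q.2) -> reduced_form (word_val w) = reduce w.
Proof.
move=> Hw; rewrite -word_val_reduce reduced_form_word //.
exact: reduced_reduce H_free.1 Hw.
Qed.

Lemma word_length_reduced_form g : word_length H g = size (reduced_form g).
Proof.
rewrite /word_length; set P := fun k => _.
have [w [rw [<- <-]]] : P (epsilon (inhabits 0%N) P).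
  apply: epsilon_spec; exists (size (reduced_form g)), (reduced_form g).
  by have [? ?] := reduced_formP g.
by rewrite reduced_form_word.
Qed.

Lemma word_length_reduced w : reduced_word H w -> word_length H (word_val w) = size w.
Proof. by move=> rw; rewrite word_length_reduced_form reduced_form_word. Qed.

Lemma word_length_eq1 g : word_length H g = 1%N -> exists i, H i g.
Proof.
rewrite word_length_reduced_form; have [[Hr _] vg] := reduced_formP g.
case: (reduced_form g) Hr vg => [|[i y] [|]] //= Hr; rewrite mulg1 => <- _.
by exists i; have [] := Hr (i, y) (mem_head _ _).
Qed.

Lemma word_length_letter i y : H i y -> y <> 1 -> word_length H y = 1%N.
Proof.
move=> Hy y1; rewrite -[y]mulg1 -[y * 1]/(word_val [:: (i, y)]) word_length_reduced //.
by split=> // q; rewrite inE => /eqP ->.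
Qed.

Lemma mem_reduced_form g : forall q, q \in reduced_form g -> H q.1 q.2.
Proof. by have [[Hr _] _] := reduced_formP g; move=> q /Hr []. Qed.

Variable F : 'I_n -> G -> G.
Hypothesis F_morph : forall k, monoid_morphism (F k).

Definition lift (g : G) : G := word_val (map_letters F (reduced_form g)).

Lemma lift_word w :
  (forall q, q \in w -> H q.1 q.2) -> lift (word_val w) = word_val (map_letters F w).
Proof. by move=> Hw; rewrite /lift reduced_form_reduce // word_val_map_reduce. Qed.

Lemma lift_morphism : monoid_morphism lift.
Proof.
split; first exact: (@lift_word [::]).
move=> x y; have [_ vx] := reduced_formP x; have [_ vy] := reduced_formP y.
rewrite -{1}vx -{1}vy -word_val_cat lift_word; first by rewrite /map_letters map_cat word_val_cat.
by move=> q; rewrite mem_cat => /orP [] /mem_reduced_form.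
Qed.

Lemma lift_letter k h : H k h -> lift h = F k h.
Proof.
move=> Hh; rewrite -[h]mulg1 -[h * 1]/(word_val [:: (k, h)]) lift_word /=.
  by rewrite !mulg1.
by move=> q; rewrite inE => /eqP ->.
Qed.

End FreeProductLift.

Section FactorConjugates.
Variables (G : groupType) (n : nat) (Gs : 'I_n -> G -> Prop).
Hypothesis Gs_free : free_product_decomp Gs.

Definition factor_proj (i k : 'I_n) (y : G) : G := if k == i then y else 1.

Lemma factor_proj_morphism i k : monoid_morphism (factor_proj i k).
Proof. by rewrite /factor_proj; case: eqP => _; split=> // x y; rewrite mulg1. Qed.

(* The retraction of G onto Gs i fixes a and kills a ^ z when j != i. *)
Lemma factor_conjg_index i j a z : Gs i a -> a <> 1 -> Gs j (a ^ z) -> i = j.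
Proof.
move=> Gia a1 Gjaz; have [//|nij] := eqVneq i j; case: a1.
have proj_morph := @factor_proj_morphism i.
have pi_morph := lift_morphism Gs_free proj_morph.
have pi_a : lift Gs (factor_proj i) a = a.
  by rewrite (lift_letter Gs_free proj_morph Gia) /factor_proj eqxx.
have : lift Gs (factor_proj i) (a ^ z) = 1.
  by rewrite (lift_letter Gs_free proj_morph Gjaz) /factor_proj eq_sym (negbTE nij).
rewrite !conjgE pi_morph.2 (monoid_morphismV pi_morph) pi_morph.2 pi_a -conjgE.
by move/eqP; rewrite conjg_eq1 => /eqP.
Qed.

End FactorConjugates.

Section Bases.
Variables (G : groupType) (n : nat) (Gs : 'I_n -> G -> Prop).
Hypothesis Gs_free : free_product_decomp Gs.
Implicit Types H K : 'I_n -> G -> Prop.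

Definition conjugators H (i : 'I_n) : G :=
  epsilon (inhabits 1) (fun x => forall y, H i y <-> Gs i (x^-1 * y * x)).

Lemma conjugatorsP H : basis Gs H -> forall i y, H i y <-> Gs i (y ^ conjugators H i).
Proof.
move=> [H_conj _] i y; rewrite conjgE mulgA; move: y.
apply: (epsilon_spec (inhabits 1) (fun x => forall y, H i y <-> Gs i (x^-1 * y * x))).
exact: H_conj.
Qed.

Definition standardize H : 'I_n -> G -> G := fun k y => y ^ conjugators H k.

(* The automorphism of G conjugating each H i onto Gs i. *)
Definition to_standard H : G -> G := lift H (standardize H).

Section Basis.
Variable H : 'I_n -> G -> Prop.
Hypothesis H_basis : basis Gs H.

Lemma to_standard_morphism : monoid_morphism (to_standard H).
Proof. by apply: lift_morphism; [exact: H_basis.2 | move=> k; apply: conjg_morphism]. Qed.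

Lemma reduced_standardize w :
  reduced_word H w -> reduced_word Gs (map_letters (standardize H) w).
Proof.
move=> [Hw sorted_w]; split; last by rewrite /map_letters -map_comp.
move=> _ /mapP [p pw ->] /=; have [Hp p1] := Hw p pw.
split; first exact/(conjugatorsP H_basis).
by move/eqP; rewrite conjg_eq1 => /eqP.
Qed.

Lemma word_length_to_standard g : word_length Gs (to_standard H g) = word_length H g.
Proof.
have [rw _] := reduced_formP H_basis.2 g.
rewrite /to_standard /lift (word_length_reduced Gs_free (reduced_standardize rw)).
by rewrite size_map (word_length_reduced_form H_basis.2).
Qed.

End Basis.

Lemma basis_sub_of_norm H K : basis Gs H -> basis Gs K ->
  basis_norm H =1 basis_norm K -> forall i y, H i y -> K i y.
Proof.
move=> bH bK eq_norm i y Hy.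
have [->|y1] := eqVneq y 1; first by have [] := bK.2.1 i.
have [j Kj] : exists j, K j y.
  apply: (word_length_eq1 bK.2); rewrite -[LHS]eq_norm.
  by apply: (word_length_letter bH.2 Hy); apply/eqP.
suff -> : i = j by [].
apply: (@factor_conjg_index _ _ _ Gs_free i j (y ^ conjugators H i)
          ((conjugators H i)^-1 * conjugators K j)).
- exact/(conjugatorsP bH).
- by move/eqP; rewrite conjg_eq1; apply/negP.
- by rewrite conjgM conjgK; apply/(conjugatorsP bK).
Qed.

Lemma same_basis_of_norm H K : basis Gs H -> basis Gs K ->
  basis_norm H =1 basis_norm K -> same_basis H K.
Proof.
by move=> bH bK eq_norm i y; split; apply: basis_sub_of_norm => // g; rewrite eq_norm.
Qed.

Lemma basis_norm_eq H K : basis Gs H -> basis Gs K ->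
  (forall i y, Gs i y -> to_standard H y = to_standard K y) ->
  basis_norm H =1 basis_norm K.
Proof.
move=> bH bK eq_std g.
have [rg vg] := reduced_formP Gs_free g.
have eq_std_g : to_standard H g = to_standard K g.
  rewrite -vg (morph_word_val _ (to_standard_morphism bH)).
  rewrite (morph_word_val _ (to_standard_morphism bK)).
  congr word_val; apply/eq_in_map => -[k y] /(mem_reduced_form Gs_free) Gy /=.
  by rewrite (eq_std k).
by rewrite /basis_norm -(word_length_to_standard bH) eq_std_g word_length_to_standard.
Qed.

End Bases.

Section PrefixLex.
Implicit Types a b : nat -> nat.

Definition eq_upto m a b := forall j, j < m -> a j = b j.

Definition lex_upto m a b := exists2 k, k < m & a k < b k /\ eq_upto k a b.

Lemma lex_upto_eq m a b b' : eq_upto m b b' -> lex_upto m a b -> lex_upto m a b'.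
Proof.
move=> eq_b [k lt_k [lt_ab eq_ab]]; exists k => //; split; first by rewrite -eq_b.
by move=> j lt_j; rewrite eq_ab // eq_b //; apply: ltn_trans lt_j lt_k.
Qed.

Lemma lex_uptoS m a b :
  lex_upto m.+1 a b -> lex_upto m a b \/ eq_upto m a b /\ a m < b m.
Proof.
move=> [k]; rewrite ltnS leq_eqVlt => /predU1P [-> [lt_m eq_m]|lt_k lt_ab].
  by right.
by left; exists k.
Qed.

Lemma wf_lex_upto m : well_founded (lex_upto m).
Proof.
elim: m => [|m IH]; first by move=> a; constructor=> b [].
suff acc_S : forall a, Acc (lex_upto m) a ->
    forall a', eq_upto m a' a -> Acc (lex_upto m.+1) a'.
  by move=> a; apply: (acc_S a (IH a)).
move=> a; elim=> {}a _ IH_lex a' eq_a'; move: {2}(a' m) (erefl (a' m)) => N.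
elim/ltn_ind: N a' eq_a' => N IH_last a' eq_a' a'_m; constructor=> b /lex_uptoS.
case=> [lt_b|[eq_b lt_b]].
  by apply: (IH_lex b) => //; apply: lex_upto_eq eq_a' lt_b.
by apply: (IH_last (b m)); rewrite -?a'_m // => j lt_j; rewrite eq_b ?eq_a'.
Qed.

End PrefixLex.

Section FiniteTags.
Variables (X : Type) (Y : eqType) (R : X -> X -> Prop) (tag : X -> Y).
Hypothesis R_trans : forall u v w, R u v -> R v w -> R u w.
Hypothesis R_tag : forall u v, R u v -> tag u != tag v.

(* Along a descending chain inside P no tag can repeat, and only finitely many
   tags are available. *)
Lemma acc_finite_tags (P : X -> Prop) (s : seq Y) :
  (forall x, P x -> tag x \in s) ->
  (forall u v, R u v -> P v -> P u \/ Acc R u) ->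
  forall x, P x -> Acc R x.
Proof.
move=> tag_s exit_P.
suff acc_k : forall k (s' : seq Y), size s' <= k -> forall x, P x ->
    (forall u, R u x -> P u -> tag u \in s') -> Acc R x.
  by move=> x Px; apply: (acc_k _ s (leqnn _) x Px) => u _ /tag_s.
elim=> [|k IH] s' size_s' x Px tags_x; constructor=> u Rux;
  have [Pu|//] := exit_P u x Rux Px.
  by move: (tags_x u Rux Pu) size_s'; case: s' {tags_x}.
apply: (IH [seq y <- s' | y != tag u]) => // [|w Rwu Pw].
  have tag_u_in : 0 < count (pred1 (tag u)) s' by rewrite -has_count has_pred1 tags_x.
  rewrite -ltnS (leq_trans _ size_s') // size_filter -(count_predC (pred1 (tag u))).
  by rewrite -add1n leq_add2r.
by rewrite mem_filter R_tag // tags_x //; apply: R_trans Rwu Rux.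
Qed.

End FiniteTags.

Section LexOrder.
Variables (G : groupType) (idx : G -> nat).
Hypothesis idx_inj : injective idx.
Implicit Types a b c : G -> nat.

Lemma not_lex_lt_eqfun a b : a =1 b -> ~ lex_lt idx a b.
Proof. by move=> eq_ab [g [+ _]]; rewrite eq_ab ltnn. Qed.

Lemma lex_lt_trans a b c : lex_lt idx a b -> lex_lt idx b c -> lex_lt idx a c.
Proof.
move=> [g1 [lt1 eq1]] [g2 [lt2 eq2]].
have [lt12|gt12|/idx_inj eq12] := ltngtP (idx g1) (idx g2).
- exists g1; split; first by rewrite -(eq2 _ lt12).
  by move=> h lt_h; rewrite eq1 ?eq2 //; apply: ltn_trans lt_h lt12.
- exists g2; split; first by rewrite (eq1 _ gt12).
  by move=> h lt_h; rewrite eq1 ?eq2 //; apply: ltn_trans lt_h gt12.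
- subst g2; exists g1; split; first exact: ltn_trans lt1 lt2.
  by move=> h lt_h; rewrite eq1 ?eq2.
Qed.

Lemma ex_idx_min (P : G -> Prop) :
  (exists g, P g) -> exists g, P g /\ forall h, idx h < idx g -> ~ P h.
Proof.
move=> [g Pg]; move: {2}(idx g) (erefl (idx g)) => k; elim/ltn_ind: k g Pg => k IH g Pg idx_g.
have [[h [lt_h Ph]]|no_smaller] := classic (exists h, idx h < k /\ P h).
  exact: IH lt_h h Ph erefl.
by exists g; split=> // h lt_h Ph; apply: no_smaller; exists h; rewrite -idx_g.
Qed.

Lemma lex_lt_total a b : [\/ lex_lt idx a b, lex_lt idx b a | a =1 b].
Proof.
have [|/not_all_ex_not neq_ab] := classic (a =1 b); first by constructor 3.
have [g [neq_g min_g]] := ex_idx_min neq_ab.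
have eq_below h : idx h < idx g -> a h = b h by move=> lt_h; apply: NNPP; exact: min_g.
have [lt_g|gt_g|//] := ltngtP (a g) (b g).
- by constructor 1; exists g.
- by constructor 2; exists g; split=> // h /eq_below.
Qed.

Definition coords a (k : nat) : nat :=
  let g := epsilon (inhabits 1) (fun g => idx g = k) in if idx g == k then a g else 0.

Lemma coords_idx a g : coords a (idx g) = a g.
Proof.
rewrite /coords; set g' := epsilon _ _.
have -> : g' = g.
  by apply: idx_inj; apply: (epsilon_spec (inhabits 1) (fun h => idx h = idx g)); exists g.
by rewrite eqxx.
Qed.

Lemma lex_lt_coords m a b : lex_lt idx a b ->
  lex_upto m (coords a) (coords b) \/ eq_upto m (coords a) (coords b).
Proof.
move=> [g [lt_g eq_below]].
have eq_coords j : j < idx g -> coords a j = coords b j.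
  by move=> lt_j; rewrite /coords; case: eqP => // idx_j; rewrite eq_below ?idx_j.
have [lt_m|ge_m] := ltnP (idx g) m.
  by left; exists (idx g); rewrite ?coords_idx.
by right=> j lt_j; apply: eq_coords; apply: leq_trans lt_j ge_m.
Qed.

End LexOrder.

Fixpoint seqs_upto (T : Type) (A : seq T) (k : nat) : seq (seq T) :=
  if k is k'.+1 then [::] :: [seq a :: t | a <- A, t <- seqs_upto A k'] else [:: [::]].

Lemma mem_seqs_upto (T : eqType) (A : seq T) k t :
  size t <= k -> all (mem A) t -> t \in seqs_upto A k.
Proof.
elim: k t => [|k IH] [|a t] //= size_t /andP [aA tA].
by rewrite inE /= allpairs_f // IH.
Qed.

Section NuclearOrder.
Variables (G : groupType) (n : nat) (Gs : 'I_n -> G -> Prop).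
Hypothesis Gs_fin : forall i, finite_pred (Gs i).
Hypothesis Gs_free : free_product_decomp Gs.
Variable idx : G -> nat.
Hypothesis idx_inj : injective idx.
Implicit Types u v : nuclear_vertex Gs.

Definition factor_elems (i : 'I_n) : seq G :=
  epsilon (inhabits [::]) (fun s => forall x, Gs i x -> x \in s).

Lemma mem_factor_elems i x : Gs i x -> x \in factor_elems i.
Proof.
move: x; apply: (epsilon_spec (inhabits [::]) (fun s => forall x, Gs i x -> x \in s)).
exact: Gs_fin.
Qed.

Definition alphabet : seq ('I_n * G) := [seq (i, y) | i <- enum 'I_n, y <- factor_elems i].

Lemma mem_alphabet i y : Gs i y -> (i, y) \in alphabet.
Proof. by move=> Gy; apply: allpairs_f_dep; rewrite ?mem_enum ?mem_factor_elems. Qed.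

Definition letters : seq G := unzip2 alphabet.

Lemma mem_letters i y : Gs i y -> y \in letters.
Proof. by move=> /mem_alphabet /(map_f snd). Qed.

Definition prefix_len : nat := (\max_(s <- letters) idx s).+1.

Definition key v : nat -> nat := coords idx (basis_norm (sval v)).

Definition bound (a : nat -> nat) : nat := \max_(k < prefix_len) a k.

Definition short_elems (c : nat) : seq G := [seq word_val w | w <- seqs_upto alphabet c].

(* The tag determines the automorphism to_standard, hence the norm of v. *)
Definition std_tag v : seq G := [seq to_standard Gs (sval v) s | s <- letters].

Lemma bound_eq_upto a b : eq_upto prefix_len a b -> bound a = bound b.
Proof. by move=> eq_ab; apply: eq_bigr => k _; apply: eq_ab. Qed.

Lemma basis_norm_le_bound v s : s \in letters -> basis_norm (sval v) s <= bound (key v).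
Proof.
move=> s_letter; have lt_s : idx s < prefix_len by rewrite ltnS leq_bigmax_seq.
rewrite -(coords_idx idx_inj).
exact: (@leq_bigmax _ (fun k : 'I_prefix_len => key v k) (Ordinal lt_s)).
Qed.

Lemma mem_short_elems g c : word_length Gs g <= c -> g \in short_elems c.
Proof.
move=> len_g; have [_ <-] := reduced_formP Gs_free g; apply: map_f.
apply: mem_seqs_upto; first by rewrite -(word_length_reduced_form Gs_free).
by apply/allP => -[i y] /(mem_reduced_form Gs_free) /mem_alphabet.
Qed.

Lemma std_tag_mem v :
  std_tag v \in seqs_upto (short_elems (bound (key v))) (size letters).
Proof.
apply: mem_seqs_upto; first by rewrite size_map.
apply/allP => _ /mapP [s s_letter ->]; apply: mem_short_elems.
by rewrite (word_length_to_standard Gs_free (svalP v)) basis_norm_le_bound.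
Qed.

Lemma nuclear_lt_std_tag u v : nuclear_lt idx u v -> std_tag u != std_tag v.
Proof.
move=> lt_uv; apply/eqP => /eq_in_map eq_std; apply: not_lex_lt_eqfun lt_uv.
apply: (basis_norm_eq Gs_free (svalP u) (svalP v)) => i y Gy.
exact: eq_std (mem_letters Gy).
Qed.

Lemma wf_nuclear_lt : well_founded (nuclear_lt (Gs := Gs) idx).
Proof.
suff acc_key : forall a u, eq_upto prefix_len (key u) a -> Acc (nuclear_lt idx) u.
  by move=> u; apply: (acc_key (key u)).
move=> a; elim: (wf_lex_upto prefix_len a) => {}a _ IH u eq_u.
apply: (@acc_finite_tags _ _ _ std_tag _ _ (fun v => eq_upto prefix_len (key v) a)
          (seqs_upto (short_elems (bound a)) (size letters))) eq_u.
- by move=> ? ? ?; apply: lex_lt_trans.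
- exact: nuclear_lt_std_tag.
- by move=> v eq_v; rewrite -(bound_eq_upto eq_v); apply: std_tag_mem.
move=> v w lt_vw eq_w; have [lt_key|eq_key] := lex_lt_coords idx_inj prefix_len lt_vw.
  by right; apply: (IH (key v)) => //; apply: lex_upto_eq eq_w lt_key.
by left=> j lt_j; rewrite -eq_w //; apply: eq_key.
Qed.

End NuclearOrder.

Theorem proposition5p1 (G : groupType) (n : nat) (Gs : 'I_n -> G -> Prop)
  (Hfin : forall i, finite_pred (Gs i))
  (Hnt : forall i, nontrivial_pred (Gs i))
  (Hfree : free_product_decomp Gs)
  (idx : G -> nat) (Hidx : injective idx) :
  (* strict order *)
  (forall u : nuclear_vertex Gs, ~ nuclear_lt idx u u) /\
  (forall u v w : nuclear_vertex Gs,
      nuclear_lt idx u v -> nuclear_lt idx v w -> nuclear_lt idx u w) /\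
  (* total: distinct nuclear vertices are comparable *)
  (forall u v : nuclear_vertex Gs,
      [\/ nuclear_lt idx u v, nuclear_lt idx v u
        | same_basis (proj1_sig u) (proj1_sig v)]) /\
  (* well-founded *)
  well_founded (nuclear_lt (Gs := Gs) idx).
Proof.
split; [|split; [|split]].
- by move=> u; apply: not_lex_lt_eqfun.
- by move=> u v w; apply: lex_lt_trans.
- move=> u v; rewrite /nuclear_lt.
  have [lt_uv|lt_vu|eq_uv] := lex_lt_total idx (basis_norm (sval u)) (basis_norm (sval v)).
  + by constructor 1.
  + by constructor 2.
  + by constructor 3; exact: (same_basis_of_norm Hfree (svalP u) (svalP v) eq_uv).
- exact: (wf_nuclear_lt Hfin Hfree Hidx).
Qed.
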